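(* The infinite words $\mathbf{t}_{3/2}$ and $\mathbf{t}'$ are uniformly recurrent.
   Context: Base-$3/2$ expansions: $\langle 0\rangle_{3/2}$ is the empty word, and for $n\ge 1$, writing $2n=3m+d$ with integers $m\ge 0$, $d\in\{0,1,2\}$, one sets $\langle n\rangle_{3/2}=\langle m\rangle_{3/2}\,d$. The Thue--Morse word in base $3/2$ is $\mathbf{t}_{3/2}=(t_n)_{n\ge0}\in\{0,1\}^{\mathbb{N}}$ where $t_n$ is the sum of the digits of $\langle n\rangle_{3/2}$ modulo $2$; equivalently the unique binary sequence with $t_0=0$, $t_{3n}=t_{3n+1}=t_{2n}$, $t_{3n+2}=1-t_{2n+1}$ for all $n\ge 0$. Dekking's word $\mathbf{t}'=(x_n)_{n\ge0}$ is the unique binary infinite word with $x_0=0$ satisfying $\mathbf{t}'=\beta(x_0x_1)\beta(x_2x_3)\beta(x_4x_5)\cdots$, where $\beta(00)=\beta(01)=010$ and $\beta(10)=\beta(11)=101$; it begins $0100101011011010101011011\cdots$. An infinite word is uniformly recurrent if every finite factor of it occurs infinitely often with bounded gaps, i.e. for every factor $u$ there is $L$ such that every factor of length $L$ contains $u$. *)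

From mathcomp Require Import all_boot.
Set Implicit Arguments. Unset Strict Implicit. Unset Printing Implicit Defensive.

(* Implemented with fuel: since
   m = 2n %/ 3 <= n - 1 for n >= 1, fuel n is always sufficient. *)
Fixpoint exp32_aux (fuel n : nat) : seq nat :=
  match fuel with
  | 0 => [::]
  | f.+1 => if n is 0 then [::]
            else rcons (exp32_aux f (n.*2 %/ 3)) (n.*2 %% 3)
  end.

Definition exp32 (n : nat) : seq nat := exp32_aux n n.

Definition t32 (n : nat) : bool := odd (sumn (exp32 n)).

Definition beta (a b : bool) : seq bool :=
  if a then [:: true; false; true] else [:: false; true; false].

(* x is a Dekking word: x_0 = 0 and x = beta(x0 x1) beta(x2 x3) ...,
   i.e. the block x_{3k} x_{3k+1} x_{3k+2} equals beta(x_{2k} x_{2k+1}). *)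
Definition dekking (x : nat -> bool) : Prop :=
  x 0 = false /\
  forall k, [:: x (3 * k); x (3 * k + 1); x (3 * k + 2)] = beta (x (2 * k)) (x (2 * k).+1).

Definition factor (w : nat -> bool) (i l : nat) : seq bool :=
  [seq w (i + j) | j <- iota 0 l].

Definition uniformly_recurrent (w : nat -> bool) : Prop :=
  forall i l, exists L, forall p, exists q,
    p <= q /\ q + l <= p + L /\ factor w q l = factor w i l.

From mathcomp Require Import all_boot zify.

(* For [y * 2^K < 3^K] the base-3/2 expansion of [3^K x + y] is that of
   [2^K x] followed by the K digits of [y] (padded with leading zeros), so
   [t32 (3^K x + y) = t32 y (+) t32 (2^K x)]: the prefix of length N of [t32]
   reappears, possibly complemented, at every multiple of [3^K] once
   [N 2^K < 3^K].  Choosing [x] with [t32 (2^K x) = 1] yields a complemented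
   copy, and a complemented copy of a complemented copy is a plain one, so
   every factor recurs with gaps bounded by about [3^K].  Dekking's word is
   the image of [t32] under the 3-uniform morphism 0 -> 010, 1 -> 101, and
   uniform morphisms preserve uniform recurrence. *)

Lemma factor_eq (w : nat -> bool) q i l :
  factor w q l = factor w i l <-> forall j, j < l -> w (q + j) = w (i + j).
Proof.
split=> [wqi j lt_jl | wqi].
  have := congr1 (nth false) wqi => /(congr1 (fun f => f j)).
  by rewrite !(nth_map 0) ?size_iota // nth_iota.
by apply/eq_in_map => j; rewrite mem_iota add0n => /wqi.
Qed.

Lemma uniformly_recurrent_blocks (d : nat) (g : bool -> nat -> bool) (v w : nat -> bool) :
  0 < d -> (forall n, w n = g (v (n %/ d)) (n %% d)) ->
  uniformly_recurrent v -> uniformly_recurrent w.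
Proof.
move=> d_gt0 wE v_ur i l.
have [L occ] := v_ur (i %/ d) l.+1.
exists (d * L + d) => p.
have [q [le_pq [le_qL /factor_eq vq]]] := occ (p %/ d).+1.
have lt_id : i %% d < d by rewrite ltn_pmod.
have lt_p := ltn_ceil p d_gt0.
have le_p := leq_divM p d.
exists (q * d + i %% d); split; [nia | split; [nia |]].
apply/factor_eq => j lt_jl.
have lt_r : (i %% d + j) %/ d < l.+1 by rewrite ltn_divLR //; nia.
have -> : i + j = i %/ d * d + (i %% d + j) by rewrite addnA -divn_eq.
by rewrite !wE -[q * d + _ + j]addnA !divnMDl // !modnMDl vq.
Qed.

Definition returns_at (w : nat -> bool) (N s : nat) (c : bool) :=
  forall y, y < N -> w (s + y) = w y (+) c.

Lemma uniformly_recurrent_from_returns (w : nat -> bool) :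
  (forall N, exists S, returns_at w N S true) ->
  (forall N, exists M, forall p, exists s c, p <= s <= p + M /\ returns_at w N s c) ->
  uniformly_recurrent w.
Proof.
move=> compl ret i l.
have [S wS] := compl (i + l).
have [M wM] := ret (S + i + l).
exists (M + S + i + l) => p.
have [s [c [/andP[le_ps le_sM] ws]]] := wM p.
case: c ws => ws.
- exists (s + S + i); split; [lia | split; [lia |]].
  apply/factor_eq => j lt_jl.
  by rewrite -!addnA ws ?wS ?addbT ?negbK //; lia.
- exists (s + i); split; [lia | split; [lia |]].
  apply/factor_eq => j lt_jl.
  by rewrite -addnA ws ?addbF //; lia.
Qed.

Lemma exp32_aux_fuel f f' n : n <= f -> n <= f' -> exp32_aux f n = exp32_aux f' n.
Proof.
elim: f f' n => [|f IH] [|f'] [|n] //= le_nf le_nf'.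
by congr rcons; apply: IH; lia.
Qed.

Lemma t32_rec n : t32 n = t32 (n.*2 %/ 3) (+) odd (n.*2 %% 3).
Proof.
case: n => [|n] //.
rewrite /t32 /exp32 /= sumn_rcons oddD; congr (odd (sumn _) (+) _).
by apply: exp32_aux_fuel; lia.
Qed.

Lemma t32_shift K x y : y * 2 ^ K < 3 ^ K ->
  t32 (3 ^ K * x + y) = t32 y (+) t32 (2 ^ K * x).
Proof.
elim: K x y => [|K IH] x y.
  by rewrite !expn0 muln1 ltnS leqn0 => /eqP->; rewrite mul1n addn0.
move=> lt_yK.
have le_y := leq_divM y.*2 3.
rewrite t32_rec (t32_rec y).
have -> : (3 ^ K.+1 * x + y).*2 = 3 ^ K * (2 * x) * 3 + y.*2 by rewrite expnS; lia.
rewrite divnMDl // modnMDl IH; last by rewrite !expnS in lt_yK; nia.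
by rewrite mulnA -expnSr addbAC.
Qed.

Lemma exp2_mul_lt_exp3 N : exists K, N * 2 ^ K < 3 ^ K.
Proof.
elim: N => [|N [K lt_K]]; first by exists 0.
exists K.+2; rewrite !expnS.
have : 2 ^ K <= 3 ^ K by case: K lt_K => // K _; rewrite leq_exp2r.
nia.
Qed.

Lemma exists_t32_exp2_mul K : 2 * 2 ^ K < 3 ^ K -> exists x, t32 (2 ^ K * x) = true.
Proof.
move=> lt_K; have K_gt0 : 0 < K by case: K lt_K.
(* [P] is [1] modulo [3^K] and a multiple of [2^K], so by [t32_shift] and
   [t32 2 = 1] the multiples [2P] and [2^K (2 (P %/ 3^K))] of [2^K] carry
   different letters. *)
set P := (3 ^ K + 1) ^ K.
have P_mod : P %% 3 ^ K = 1.
  rewrite /P -modnXm addnC modnDr modnXm exp1n modn_small //.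
  by rewrite -{1}(expn0 3) ltn_exp2l.
have /dvdnP[j Pj] : 2 ^ K %| P.
  by apply: dvdn_exp2r; rewrite dvdn2 oddD oddX orbT /=; case: (K) K_gt0.
have E : 2 ^ K * (2 * j) = 3 ^ K * (2 * (P %/ 3 ^ K)) + 2.
  by have := divn_eq P (3 ^ K); rewrite P_mod Pj; lia.
have := t32_shift K (2 * (P %/ 3 ^ K)) 2 lt_K; rewrite -E.
case t32D: (t32 (2 ^ K * (2 * (P %/ 3 ^ K)))) => t32j.
  by exists (2 * (P %/ 3 ^ K)).
by exists (2 * j); rewrite t32j.
Qed.

Lemma t32_complemented_return N : exists S, returns_at t32 N S true.
Proof.
have [K lt_K] := exp2_mul_lt_exp3 (N + 2).
have [|x t32x] := exists_t32_exp2_mul K; first nia.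
exists (3 ^ K * x) => y lt_yN.
by rewrite t32_shift ?t32x //; nia.
Qed.

Lemma t32_bounded_returns N :
  exists M, forall p, exists s c, p <= s <= p + M /\ returns_at t32 N s c.
Proof.
have [K lt_K] := exp2_mul_lt_exp3 N.
have pow_gt0 : 0 < 3 ^ K by rewrite expn_gt0.
exists (3 ^ K) => p.
exists (3 ^ K * (p %/ 3 ^ K).+1), (t32 (2 ^ K * (p %/ 3 ^ K).+1)); split.
  have := ltn_ceil p pow_gt0; have := leq_divM p (3 ^ K); nia.
by move=> y lt_yN; rewrite t32_shift //; nia.
Qed.

Lemma t32_uniformly_recurrent : uniformly_recurrent t32.
Proof.
exact: uniformly_recurrent_from_returns t32_complemented_return t32_bounded_returns.
Qed.

Definition dekking_word (n : nat) : bool := t32 (n %/ 3) (+) (n %% 3 == 1).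

Lemma odd_lt3 r : r < 3 -> odd r = (r == 1).
Proof. by case: r => [|[|[|]]]. Qed.

Lemma dekking_dekking_word : dekking dekking_word.
Proof.
split=> // k.
have blockE r : r < 3 -> dekking_word (3 * k + r) = t32 k (+) (r == 1).
  by move=> lt_r3; rewrite /dekking_word; congr (t32 _ (+) (_ == 1)); lia.
have -> : dekking_word (2 * k) = t32 k.
  by rewrite /dekking_word (t32_rec k) -mul2n odd_lt3 ?ltn_pmod.
rewrite (blockE 1) // (blockE 2) // -[3 * k]addn0 blockE //.
by rewrite /beta; case: (t32 k).
Qed.

Lemma dekking_block x k r : dekking x -> r < 3 ->
  x (3 * k + r) = x (2 * k) (+) (r == 1).
Proof.
case=> _ /(_ k); rewrite /beta.
by case: (x (2 * k)) => -[x0 x1 x2]; case: r => [|[|[|]]] // _; rewrite ?addn0 ?x0 ?x1 ?x2.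
Qed.

Lemma dekking_mod3 x n : dekking x -> x n = x (3 * (n %/ 3)) (+) (n %% 3 == 1).
Proof.
move=> dx; rewrite {1}(divn_eq n 3) mulnC.
by rewrite dekking_block ?ltn_pmod // -[3 * _]addn0 dekking_block //= addbF.
Qed.

Lemma dekking_mul3 x n : dekking x -> x (3 * n) = t32 n.
Proof.
move=> dx; elim/ltn_ind: n => -[_ | n IH]; first by case: dx.
rewrite -[3 * _]addn0 dekking_block // addbF dekking_mod3 // IH; last lia.
by rewrite (t32_rec n.+1) -mul2n odd_lt3 ?ltn_pmod.
Qed.

Theorem corollary13 :
  uniformly_recurrent t32 /\
  (exists x, dekking x) /\
  (forall x, dekking x -> uniformly_recurrent x).
Proof.
split; first exact: t32_uniformly_recurrent.
split; first by exists dekking_word; exact: dekking_dekking_word.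
move=> x dx.
apply: (uniformly_recurrent_blocks 3 (fun b r => b (+) (r == 1)) t32 x isT _
          t32_uniformly_recurrent) => n.
by rewrite dekking_mod3 // dekking_mul3.
Qed.
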